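(* Let $p_d:\mathbb R^n\to\mathbb R$ be a homogeneous polynomial of degree $d\ge2$ consisting only of non-separable monomials (i.e., every monomial appearing in $p_d$ with nonzero coefficient involves at least two distinct variables). Then $p_d$ is not convex. *)

From HB Require Import structures.
From mathcomp Require Import all_boot all_order all_algebra.
From mathcomp Require Import reals.
From mathcomp Require Import mpoly.
Set Implicit Arguments. Unset Strict Implicit. Unset Printing Implicit Defensive.
Import Order.TTheory GRing.Theory Num.Theory.
Local Open Scope ring_scope.

Definition nonseparable_monom (n : nat) (m : 'X_{1..n}) : bool :=
  (1 < #|[set i : 'I_n | (m i != 0)%N]|)%N.

Definition only_nonseparable (R : nzRingType) (n : nat) (p : {mpoly R[n]}) : Prop :=
  forall m, m \in msupp p -> nonseparable_monom m.

Definition mpoly_convex (R : realType) (n : nat) (p : {mpoly R[n]}) : Prop :=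
  forall (x y : 'I_n -> R) (t : R), 0 <= t -> t <= 1 ->
    p.@[fun i => t * x i + (1 - t) * y i] <= t * p.@[x] + (1 - t) * p.@[y].

From mathcomp Require Import all_boot all_order all_algebra.
From mathcomp Require Import reals mpoly lra.
Set Implicit Arguments. Unset Strict Implicit. Unset Printing Implicit Defensive.
Import Order.TTheory GRing.Theory Num.Theory.
Local Open Scope ring_scope.

(* A non-separable polynomial vanishes at every point with at most one nonzero
   coordinate. Midpoint convexity then forces p <= 0 everywhere: a point with
   k nonzero coordinates is the midpoint of one with k - 1 nonzero coordinates
   and one on a coordinate axis. As p(0) = 0, convexity also gives
   p(x) + p(-x) >= 0, so p vanishes on all of R^n and is the zero polynomial. *)

Lemma base_expansion_inj (D n : nat) (a b : 'I_n -> nat) :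
  (forall i, a i < D)%N -> (forall i, b i < D)%N ->
  (\sum_(i < n) D ^ i * a i = \sum_(i < n) D ^ i * b i)%N -> a =1 b.
Proof.
elim: n a b => [|n IHn] a b ltaD ltbD; first by move=> _ [].
have D_gt0 : (0 < D)%N by apply: leq_ltn_trans (ltaD ord0).
have shift (c : 'I_n.+1 -> nat) :
    (\sum_(i < n) D ^ lift ord0 i * c (lift ord0 i)
     = D * \sum_(i < n) D ^ i * c (lift ord0 i))%N.
  rewrite big_distrr; apply: eq_bigr => i _.
  by rewrite /= /bump add1n expnS mulnA.
rewrite !big_ord_recl !expn0 !mul1n !shift => E.
have a0 : a ord0 = b ord0.
  move: (congr1 (modn^~ D) E) => /=.
  by rewrite !(addnC (_ ord0)) !(mulnC D) !modnMDl !modn_small.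
move: E; rewrite a0 => /addnI /eqP; rewrite eqn_pmul2l // => /eqP E.
move=> i; have [j ->|->] // := unliftP ord0 i.
exact: IHn (a \o lift ord0) (b \o lift ord0) (fun=> ltaD _) (fun=> ltbD _) E j.
Qed.

Section Kronecker.
Variables (R : comNzRingType) (n : nat).
Implicit Types (p : {mpoly R[n]}) (m : 'X_{1..n}).

(* Kronecker substitution X_i := t ^+ D ^ i with D = msize p, which exceeds
   every exponent of p, so distinct monomials of p become distinct powers of t. *)
Definition kronecker_exp D m := (\sum_(i < n) D ^ i * m i)%N.

Definition kronecker p : {poly R} :=
  \sum_(m <- msupp p) p@_m *: 'X^(kronecker_exp (msize p) m).

Lemma horner_kronecker p t :
  (kronecker p).[t] = p.@[fun i => t ^+ (msize p ^ i)].
Proof.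
rewrite mevalE horner_sum; apply: eq_bigr => m _.
rewrite hornerZ hornerXn /kronecker_exp.
rewrite (big_morph (fun k => t ^+ k) (exprD t) (expr0 t)).
by congr (_ * _); apply: eq_bigr => i _; rewrite exprM.
Qed.

Lemma kronecker_exp_inj p : {in msupp p &, injective (kronecker_exp (msize p))}.
Proof.
have lt_msize m i : m \in msupp p -> (m i < msize p)%N.
  move=> /msize_mdeg_lt; apply: leq_ltn_trans.
  by rewrite mdegE (bigD1 i) //= leq_addr.
move=> m1 m2 m1p m2p E; apply/mnmP => i.
exact: (@base_expansion_inj _ _ m1 m2
  (lt_msize _ ^~ m1p) (lt_msize _ ^~ m2p) E).
Qed.

Lemma coef_kronecker p m : m \in msupp p ->
  (kronecker p)`_(kronecker_exp (msize p) m) = p@_m.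
Proof.
move=> mp; rewrite coef_sum (bigD1_seq _ mp (msupp_uniq p)) /=.
rewrite coefZ coefXn eqxx mulr1 big1_seq ?addr0 // => m' /andP[m'_neq_m m'p].
rewrite coefZ coefXn; case: eqP => [E|_]; last by rewrite mulr0.
by rewrite (kronecker_exp_inj mp m'p E) eqxx in m'_neq_m.
Qed.

Lemma kronecker_neq0 p : p != 0 -> kronecker p != 0.
Proof.
move=> /mlead_supp lead_p; apply/eqP => kp0.
move: (coef_kronecker lead_p); rewrite kp0 coef0 => /esym/eqP.
by rewrite mcoeff_eq0 lead_p.
Qed.

End Kronecker.

Lemma mpoly_eval_eq0 (R : numDomainType) (n : nat) (p : {mpoly R[n]}) :
  (forall v, p.@[v] = 0) -> p = 0.
Proof.
move=> p_eval0; apply/eqP; apply: contraT => /kronecker_neq0 kp_neq0.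
pose roots := [seq k%:R | k <- iota 0 (size (kronecker p))] : seq R.
have roots_root : all (root (kronecker p)) roots.
  by apply/allP => _ /mapP[k _ ->]; rewrite /root horner_kronecker p_eval0.
have roots_uniq : uniq roots.
  by rewrite map_inj_uniq ?iota_uniq // => i j /eqP; rewrite eqr_nat => /eqP.
have := max_poly_roots kp_neq0 roots_root roots_uniq.
by rewrite size_map size_iota ltnn.
Qed.

Definition coord_support (V : nmodType) (n : nat) (x : 'I_n -> V) : {set 'I_n} :=
  [set i | x i != 0].

Lemma meval_nonseparable_axes (R : comNzRingType) (n : nat) (p : {mpoly R[n]})
    (x : 'I_n -> R) :
  only_nonseparable p -> (#|coord_support x| <= 1)%N -> p.@[x] = 0.
Proof.
move=> p_nonsep /card_le1_eqP x_axis; rewrite mevalE big_seq big1 // => m mp.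
have /card_gt1P[i [j [mi mj i_neq_j]]] := p_nonsep m mp.
rewrite !inE in mi mj.
have [k [mk xk]] : exists k, m k != 0%N /\ x k = 0.
  have [xi0|xi_neq0] := eqVneq (x i) 0; first by exists i.
  have [xj0|xj_neq0] := eqVneq (x j) 0; first by exists j.
  by rewrite (x_axis i j) ?inE ?eqxx in i_neq_j.
by rewrite (bigD1 k) //= xk expr0n (negbTE mk) mul0r mulr0.
Qed.

Section MidpointConvex.
Variables (R : numFieldType) (n : nat) (f : 'rV[R]_n -> R).
Hypothesis f_midconvex : forall x y, f (2^-1 *: (x + y)) <= 2^-1 * (f x + f y).
Hypothesis f_axes :
  forall x : 'rV_n, (#|coord_support (x ord0)| <= 1)%N -> f x = 0.

Lemma midconvex_axes_le0 x : f x <= 0.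
Proof.
move: {2}#|_| (leqnn #|coord_support (x ord0)|) => k.
elim: k x => [|k IHk] x supp_x.
  by rewrite f_axes ?(leq_trans supp_x).
have [supp0|[j supp_j]] := set_0Vmem (coord_support (x ord0)).
  by rewrite f_axes // supp0 cards0.
pose y := \row_i (if i == j then 0 else 2 * x 0 i).
pose z := \row_i (if i == j then 2 * x 0 i else 0).
have -> : x = 2^-1 *: (y + z).
  apply/rowP => i; rewrite !mxE; case: eqP => _;
  by rewrite ?(add0r, addr0) mulKf ?pnatr_eq0.
apply: le_trans (f_midconvex y z) _.
have supp_y : coord_support (y ord0) = coord_support (x ord0) :\ j.
  apply/setP => i; rewrite !inE mxE.
  by case: (eqVneq i j) => _ /=; rewrite ?eqxx // mulf_eq0 pnatr_eq0.
have fz0 : f z = 0.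
  apply: f_axes; rewrite -[X in (_ <= X)%N](cards1 j) subset_leq_card //.
  apply/subsetP => i; rewrite !inE mxE.
  by case: (eqVneq i j) => //= _; rewrite eqxx.
have fy_le0 : f y <= 0.
  by apply: IHk; move: supp_x; rewrite supp_y (cardsD1 j) supp_j add1n ltnS.
by rewrite fz0 addr0 pmulr_rle0 ?invr_gt0 ?ltr0n.
Qed.

Lemma midconvex_axes_eq0 x : f x = 0.
Proof.
apply/le_anti; rewrite midconvex_axes_le0 /=.
have f0 : f 0 = 0.
  apply: f_axes; rewrite leqW // leqn0 cards_eq0.
  by apply/eqP/setP => i; rewrite !inE mxE eqxx.
have := f_midconvex x (- x).
rewrite subrr scaler0 f0 pmulr_rge0 ?invr_gt0 ?ltr0n //.
by move/le_trans; apply; rewrite gerDl midconvex_axes_le0.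
Qed.

End MidpointConvex.

Lemma mpoly_convex_midpoint (R : realType) (n : nat) (p : {mpoly R[n]}) :
  mpoly_convex p -> forall v w : 'rV_n,
  p.@[(2^-1 *: (v + w)) ord0] <= 2^-1 * (p.@[v ord0] + p.@[w ord0]).
Proof.
move=> p_convex v w; have half : 1 - 2^-1 = 2^-1 :> R by lra.
have := p_convex (v ord0) (w ord0) 2^-1 ltac:(lra) ltac:(lra).
rewrite half -mulrDr (@meval_eq _ _ ((2^-1 *: (v + w)) ord0)
  (fun i => 2^-1 * v ord0 i + 2^-1 * w ord0 i)) // => i.
by rewrite !mxE mulrDr.
Qed.

Theorem lemma3 (R : realType) (n d : nat) (p : {mpoly R[n]}) :
  (2 <= d)%N -> p != 0 -> p \is d.-homog -> only_nonseparable p ->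
  ~ mpoly_convex p.
Proof.
move=> _ p_neq0 _ p_nonsep /mpoly_convex_midpoint p_midconvex.
move/negP: p_neq0; apply; apply/eqP/mpoly_eval_eq0 => x.
have := midconvex_axes_eq0 (f := fun v => p.@[v ord0]) p_midconvex
  (fun v => meval_nonseparable_axes p_nonsep) (\row_i x i).
by under meval_eq do rewrite mxE.
Qed.
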